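(* Let $N\ge 2$ and $0<\gamma_1\le\dots\le\gamma_N$. There exists a sum-rate optimal spanning tree on $\{1,\dots,N\}$ in which vertex $N$ has degree $1$.
   Context: For distinct $i,j$ put $\varphi(i,j)=\log_2\!\big(\gamma_i+\frac{\gamma_i}{\gamma_i+\gamma_j}\big)$. For a spanning tree $T$ on $\{1,\dots,N\}$ with neighbor sets $A_i^T$, define $R_{\mathrm s}(T)=\frac{1}{2(N-1)}\sum_{i=1}^N \min_{j\in A_i^T}\varphi(i,j)$. A spanning tree is called sum-rate optimal if it maximizes $R_{\mathrm s}$ over all spanning trees on $\{1,\dots,N\}$. *)

From mathcomp Require Import all_boot.
From Stdlib Require Import Reals.

Set Implicit Arguments.
Unset Strict Implicit.
Unset Printing Implicit Defensive.

(* Vertex i : 'I_N represents vertex i+1 of {1,...,N}. *)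

Definition log2R (x : R) : R := (ln x / ln 2)%R.

Definition phi (N : nat) (gamma : 'I_N -> R) (i j : 'I_N) : R :=
  log2R (gamma i + gamma i / (gamma i + gamma j))%R.

Definition simple_graph (N : nat) (e : rel 'I_N) : Prop :=
  (forall x y, e x y = e y x) /\ (forall x, e x x = false).

Definition connected_graph (N : nat) (e : rel 'I_N) : Prop :=
  forall x y, connect e x y.

Definition acyclic_graph (N : nat) (e : rel 'I_N) : Prop :=
  ~ (exists (x : 'I_N) (p : seq 'I_N),
        [/\ 2 <= size p, uniq (x :: p), path e x p & e (last x p) x]).

Definition spanning_tree (N : nat) (e : rel 'I_N) : Prop :=
  simple_graph e /\ connected_graph e /\ acyclic_graph e.

Definition nbrs (N : nat) (e : rel 'I_N) (i : 'I_N) : seq 'I_N :=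
  [seq j <- enum 'I_N | e i j].

(* min_{j in A_i} phi(i,j); the neighbour set is nonempty for spanning trees
   with N >= 2 (the value 0 for an empty set is never used there). *)
Definition min_nbr_phi (N : nat) (gamma : 'I_N -> R) (e : rel 'I_N) (i : 'I_N) : R :=
  match nbrs e i with
  | [::] => 0%R
  | j0 :: s => foldr (fun j m => Rmin (phi gamma i j) m) (phi gamma i j0) s
  end.

Definition sum_rate (N : nat) (gamma : 'I_N -> R) (e : rel 'I_N) : R :=
  (/ (2 * (INR N - 1)) *
   foldr (fun i acc => min_nbr_phi gamma e i + acc) 0 (enum 'I_N))%R.

Definition sum_rate_optimal (N : nat) (gamma : 'I_N -> R) (e : rel 'I_N) : Prop :=
  spanning_tree e /\
  (forall e' : rel 'I_N, spanning_tree e' -> (sum_rate gamma e' <= sum_rate gamma e)%R).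

Definition degree (N : nat) (e : rel 'I_N) (v : 'I_N) : nat := size (nbrs e v).

(* Take any sum-rate optimal tree T and a neighbour a of the vertex n of
   largest gamma.  Contract the edge n-a and hang n back onto a as a leaf: the
   result is again a spanning tree, and every vertex i either keeps all its
   neighbours or sees n replaced by a.  Since gamma_a <= gamma_n and
   phi(i, j) decreases in gamma_j, no minimum min_j phi(i, j) decreases, so the
   new tree is still optimal and n has degree 1 in it. *)
From mathcomp Require Import all_boot.
From Stdlib Require Import Reals Lra Classical_Prop FunctionalExtensionality.

Set Implicit Arguments.
Unset Strict Implicit.
Unset Printing Implicit Defensive.

Lemma foldr_Rmin_le (T : eqType) (f : T -> R) j0 s j :
  j \in j0 :: s -> (foldr (fun j m => Rmin (f j) m) (f j0) s <= f j)%R.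
Proof.
elim: s j => [|y s IH] j /=; first by rewrite inE => /eqP ->; apply: Rle_refl.
rewrite !inE => /or3P [/eqP ->|/eqP ->|Hj]; last 2 first.
- exact: Rmin_l.
- by apply: Rle_trans (Rmin_r _ _) _; apply: IH; rewrite inE Hj orbT.
by apply: Rle_trans (Rmin_r _ _) _; apply: IH; rewrite inE eqxx.
Qed.

Lemma foldr_Rmin_glb (T : eqType) (f : T -> R) j0 s c :
  (forall j, j \in j0 :: s -> (c <= f j)%R) ->
  (c <= foldr (fun j m => Rmin (f j) m) (f j0) s)%R.
Proof.
elim: s => [|y s IH] /= Hc; first by apply: Hc; rewrite inE eqxx.
apply: Rmin_glb; first by apply: Hc; rewrite !inE eqxx orbT.
by apply: IH => j; rewrite inE => /orP [|] Hj; apply: Hc; rewrite !inE Hj ?orbT.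
Qed.

Lemma exists_maximizer (T : eqType) (P : T -> Prop) (f : T -> R) (s : seq T) :
  (exists2 x, x \in s & P x) ->
  exists2 x, P x & forall y, y \in s -> P y -> (f y <= f x)%R.
Proof.
elim: s => [[x //]|a s IH] [x Hx Px].
have [/IH [m Pm Hm]|Hnone] := classic (exists2 x, x \in s & P x); last first.
  have Ex : x = a by move: Hx; rewrite inE => /orP [/eqP //|Hx]; case: Hnone; exists x.
  exists a; first by rewrite -Ex.
  move=> y; rewrite inE => /orP [/eqP -> _|Hy Py]; first exact: Rle_refl.
  by case: Hnone; exists y.
case: (classic (P a)) => [Pa|nPa]; last first.
  exists m => // y; rewrite inE => /orP [/eqP -> /nPa //|]; exact: Hm.
case: (Rle_lt_dec (f a) (f m)) => Ham.
  exists m => // y; rewrite inE => /orP [/eqP -> _ //|]; exact: Hm.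
exists a => // y; rewrite inE => /orP [/eqP -> _|Hy Py]; first exact: Rle_refl.
by apply: Rle_trans (Hm _ Hy Py) _; left.
Qed.

Lemma exists_maximizer_fin (T : finType) (P : T -> Prop) (f : T -> R) :
  (exists x, P x) -> exists2 x, P x & forall y, P y -> (f y <= f x)%R.
Proof.
case=> x Px; have [|m Pm Hm] := @exists_maximizer _ P f (enum T).
  by exists x; rewrite ?mem_enum.
by exists m => // y; apply: Hm; rewrite mem_enum.
Qed.

Definition graph_cycle (T : eqType) (e : rel T) (x : T) (p : seq T) : Prop :=
  [/\ 2 <= size p, uniq (x :: p), path e x p & e (last x p) x].

Lemma graph_cycle_rot (T : eqType) (e : rel T) x p v :
  graph_cycle e x p -> v \in x :: p ->
  exists2 s, graph_cycle e v s & v :: s =i x :: p.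
Proof.
case=> Hsz Hu Hp He Hv.
have Hc : cycle e (x :: p) by rewrite /= rcons_path Hp He.
case/rot_to: Hv => i s Hrot.
have := rot_cycle i e (x :: p); rewrite Hrot Hc /= rcons_path => /andP [Hps Hls].
exists s; last by move=> w; rewrite -Hrot mem_rot.
split=> //; last by have := rot_uniq i (x :: p); rewrite Hrot Hu.
by have := size_rot i (x :: p); rewrite Hrot /= => -[->].
Qed.

Lemma uniq_head_last_neq (T : eqType) (v : T) s :
  uniq s -> 2 <= size s -> head v s != last v s.
Proof.
case: s => [|y [|z t]] //= /andP [Hy _] _.
by apply: contraNneq Hy => ->; rewrite mem_last.
Qed.

Lemma connected_has_nbr N (e : rel 'I_N) x y :
  connected_graph e -> x != y -> exists j, e x j.
Proof.
move=> Hc Hxy; case/connectP: (Hc x y) => [[|j p]] /=.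
  by move=> _ Hy; rewrite Hy eqxx in Hxy.
by case/andP=> Hxj _ _; exists j.
Qed.

Lemma spanning_tree_has_nbr N (e : rel 'I_N) :
  1 < N -> spanning_tree e -> forall x, exists j, e x j.
Proof.
move=> HN [_ [Hc _]] x.
case: (eqVneq x (Ordinal (ltnW HN))) => [Hx|Hx]; last exact: connected_has_nbr Hc Hx.
by apply: (connected_has_nbr (y := Ordinal HN) Hc); rewrite Hx.
Qed.

Section Star.
Variables (N : nat) (c : 'I_N).

Definition star : rel 'I_N := fun x y => (x != y) && ((x == c) || (y == c)).

Lemma star_connected : connected_graph star.
Proof.
have to_c z : connect star z c.
  case: (eqVneq z c) => [->|Hz]; first exact: connect0.
  by apply: connect1; rewrite /star Hz eqxx orbT.
have from_c z : connect star c z.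
  case: (eqVneq z c) => [->|Hz]; first exact: connect0.
  by apply: connect1; rewrite /star eq_sym Hz eqxx.
by move=> x y; exact: connect_trans (to_c x) (from_c y).
Qed.

(* A star edge avoiding [c] is impossible, and every cycle has one. *)
Lemma star_acyclic : acyclic_graph star.
Proof.
have off_c u v : u != c -> v != c -> star u v = false.
  by move=> Hu Hv; rewrite /star (negbTE Hu) (negbTE Hv) andbF.
case=> x [p Hcyc].
case: (boolP (c \in x :: p)) => Hin.
  have [[|y [|z t]] [//= _ Hu Hp _] _] := graph_cycle_rot Hcyc Hin.
  move: Hu Hp; rewrite /= !inE !negb_or => /andP [/and3P [Hcy Hcz _] _] /and3P [_ Hyz _].
  by rewrite off_c // 1?eq_sym in Hyz.
case: Hcyc Hin => Hsz _ Hp _; case: p Hsz Hp => [|y t] //= _ /andP [Hxy _].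
rewrite !inE !negb_or => /and3P [Hxc Hyc _].
by rewrite off_c // 1?eq_sym in Hxy.
Qed.

Lemma star_spanning_tree : spanning_tree star.
Proof.
split; [split|split]; last exact: star_acyclic; last exact: star_connected.
- by move=> x y; rewrite /star eq_sym orbC.
- by move=> x; rewrite /star eqxx.
Qed.

End Star.

Section SumRate.
Variables (N : nat) (gamma : 'I_N -> R).

Lemma mem_nbrs (e : rel 'I_N) i j : (j \in nbrs e i) = e i j.
Proof. by rewrite /nbrs mem_filter mem_enum andbT. Qed.

Lemma min_nbr_phi_le (e : rel 'I_N) i j :
  e i j -> (min_nbr_phi gamma e i <= phi gamma i j)%R.
Proof.
rewrite -mem_nbrs /min_nbr_phi; case: (nbrs e i) => [|j0 s] //.
exact: foldr_Rmin_le.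
Qed.

Lemma min_nbr_phi_glb (e : rel 'I_N) i c :
  (exists j, e i j) -> (forall j, e i j -> (c <= phi gamma i j)%R) ->
  (c <= min_nbr_phi gamma e i)%R.
Proof.
move=> [j]; rewrite -mem_nbrs /min_nbr_phi => Hj Hc.
have Hc' j' : j' \in nbrs e i -> (c <= phi gamma i j')%R by rewrite mem_nbrs; apply: Hc.
by move: Hj Hc'; case: (nbrs e i) => [|j0 s] // _; apply: foldr_Rmin_glb.
Qed.

Lemma sum_rate_le (e e' : rel 'I_N) : 2 <= N ->
  (forall i, (min_nbr_phi gamma e i <= min_nbr_phi gamma e' i)%R) ->
  (sum_rate gamma e <= sum_rate gamma e')%R.
Proof.
move=> HN Hle; rewrite /sum_rate; apply: Rmult_le_compat_l.
  have : (2 <= INR N)%R by rewrite -[2%R]/(INR 2); apply/le_INR/leP.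
  by move=> H2; left; apply: Rinv_0_lt_compat; lra.
elim: (enum 'I_N) => [|x l IH] /=; [exact: Rle_refl | exact: Rplus_le_compat].
Qed.

Lemma phi_antitone i j k :
  (0 < gamma i)%R -> (0 < gamma j)%R -> (gamma j <= gamma k)%R ->
  (phi gamma i k <= phi gamma i j)%R.
Proof.
move=> Hi Hj Hjk; rewrite /phi /log2R.
have Hln2 : (0 < ln 2)%R by have := ln_lt_2; lra.
apply: Rmult_le_compat_r; first by left; apply: Rinv_0_lt_compat.
have Hpos : (0 < gamma i + gamma i / (gamma i + gamma k))%R.
  have : (0 < gamma i / (gamma i + gamma k))%R by apply: Rdiv_lt_0_compat; lra.
  lra.
have Hle : (gamma i + gamma i / (gamma i + gamma k)
            <= gamma i + gamma i / (gamma i + gamma j))%R.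
  apply: Rplus_le_compat_l; apply: Rmult_le_compat_l; first lra.
  apply: Rinv_le_contravar; lra.
case: (Rle_lt_or_eq_dec _ _ Hle) => [Hlt|->]; last exact: Rle_refl.
by left; apply: ln_increasing.
Qed.

Lemma exists_sum_rate_optimal : 0 < N -> exists e, sum_rate_optimal gamma e.
Proof.
move=> HN.
pose of_ffun (f : {ffun 'I_N * 'I_N -> bool}) : rel 'I_N := fun x y => f (x, y).
have of_ffunK (e : rel 'I_N) : of_ffun [ffun p => e p.1 p.2] = e.
  by apply: functional_extensionality => x; apply: functional_extensionality => y;
     rewrite /of_ffun ffunE.
have [|f Hf Hmax] := exists_maximizer_fin (P := fun f => spanning_tree (of_ffun f))
                                        (fun f => sum_rate gamma (of_ffun f)).
  by exists [ffun p => star (Ordinal HN) p.1 p.2]; rewrite of_ffunK; apply: star_spanning_tree.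
exists (of_ffun f); split=> // e He.
by rewrite -(of_ffunK e); apply: Hmax; rewrite of_ffunK.
Qed.

End SumRate.

Section MakeLeaf.
Variables (N : nat) (e : rel 'I_N) (n a : 'I_N).
Hypothesis e_tree : spanning_tree e.
Hypothesis e_na : e n a.

(* Contract the edge [n-a] and hang [n] back onto [a] as a leaf. *)
Definition make_leaf : rel 'I_N := fun x y =>
  (x != y) && (if (x == n) || (y == n) then e x y && ((x == a) || (y == a))
               else [|| e x y, (x == a) && e y n | (y == a) && e x n]).

Let e_sym x y : e x y = e y x.
Proof. by case: e_tree => [[He _] _]; apply: He. Qed.

Let e_irr x : e x x = false.
Proof. by case: e_tree => [[_ He] _]; apply: He. Qed.

Let a_neq_n : a != n.
Proof. by apply: contraTneq e_na => ->; rewrite e_irr. Qed.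

Lemma make_leaf_sym x y : make_leaf x y = make_leaf y x.
Proof.
rewrite /make_leaf [y == x]eq_sym (e_sym y x).
by case: (x == y); case: (x == n); case: (y == n); case: (x == a); case: (y == a);
  case: (e x y); case: (e y n); case: (e x n).
Qed.

Lemma make_leaf_na : make_leaf n a.
Proof. by rewrite /make_leaf eq_sym a_neq_n eqxx /= e_na eqxx orbT. Qed.

Lemma make_leaf_nbr x y : make_leaf x y -> e x y \/ e x n.
Proof.
rewrite /make_leaf => /andP [_]; case: ifP => _; first by case/andP; left.
case/or3P => [|/andP [/eqP -> _]|/andP [_]]; [by left | by right; rewrite e_sym | by right].
Qed.

Lemma make_leaf_off x y : x != n -> x != a -> y != n -> y != a ->
  make_leaf x y -> e x y.
Proof.
move=> Hxn Hxa Hyn Hya.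
by rewrite /make_leaf (negbTE Hxn) (negbTE Hyn) (negbTE Hxa) (negbTE Hya) !orbF => /andP [].
Qed.

Lemma make_leaf_n_nbr y : make_leaf n y = (y == a).
Proof.
rewrite /make_leaf eqxx /= [n == a]eq_sym (negbTE a_neq_n) orFb.
by case: (eqVneq y a) => [->|_]; rewrite ?andbF // eq_sym a_neq_n e_na.
Qed.

Lemma make_leaf_degree : degree make_leaf n = 1.
Proof.
rewrite /degree /nbrs size_filter (eq_count (a2 := pred1 a)) => [|j];
  last exact: make_leaf_n_nbr.
by rewrite count_uniq_mem ?enum_uniq ?mem_enum.
Qed.

Lemma make_leaf_connected : connected_graph make_leaf.
Proof.
case: e_tree => [_ [e_conn _]].
have Hsym : symmetric make_leaf by exact: make_leaf_sym.
have from_n y : e n y -> connect make_leaf n y.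
  move=> Hy; case: (eqVneq y a) => [->|Hya]; first exact/connect1/make_leaf_na.
  apply: connect_trans (connect1 make_leaf_na) (connect1 _).
  have Hyn : y != n by apply: contraTneq Hy => ->; rewrite e_irr.
  by rewrite /make_leaf eq_sym Hya (negbTE a_neq_n) (negbTE Hyn) /= eqxx (e_sym y n) Hy orbT.
have Hsub : subrel e (connect make_leaf).
  move=> x y Hxy; case: (eqVneq x n) => [Hx|Hxn].
    by rewrite Hx; apply: from_n; rewrite -Hx.
  case: (eqVneq y n) => [Hy|Hyn].
    by rewrite (sym_connect_sym Hsym) Hy; apply: from_n; rewrite e_sym -Hy.
  apply: connect1; rewrite /make_leaf (negbTE Hxn) (negbTE Hyn) /= Hxy andbT.
  by apply: contraTneq Hxy => ->; rewrite e_irr.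
by move=> x y; exact: connect_sub Hsub _ _ (e_conn x y).
Qed.

(* [n] is a leaf of [make_leaf], and the two cycle neighbours of [n] differ. *)
Lemma make_leaf_cycle_avoid_n x p : graph_cycle make_leaf x p -> n \notin x :: p.
Proof.
move=> Hcyc; apply/negP => Hn.
have [[|h t] [Hsz Hu Hp Hl] _] := graph_cycle_rot Hcyc Hn; first by [].
case/andP: Hu => _ Hu; case/andP: Hp => Hh _.
rewrite make_leaf_n_nbr in Hh; rewrite /= make_leaf_sym make_leaf_n_nbr in Hl.
by have := @uniq_head_last_neq _ n (h :: t) Hu Hsz; rewrite /= (eqP Hl) (eqP Hh) eqxx.
Qed.

Lemma make_leaf_path_off x p : all [pred u | (u != n) && (u != a)] (x :: p) ->
  path make_leaf x p -> path e x p.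
Proof.
move=> Hall; apply: (sub_in_path _ Hall) => u v /andP [Hun Hua] /andP [Hvn Hva].
exact: make_leaf_off.
Qed.

(* A cycle of [make_leaf] through [a] uses one or two contracted edges; putting
   [n] back where needed gives a cycle of [e]. *)
Lemma make_leaf_cycle_through_a s :
  graph_cycle make_leaf a s -> n \notin a :: s -> exists x p, graph_cycle e x p.
Proof.
case: s => [|h t] [//= Hsz Hu Hp Hl]; rewrite inE negb_or => /andP [_ Hnht].
case/andP: Hu => Haht Hut; case/andP: Hp => Hah Hpt.
have Hall : all [pred u | (u != n) && (u != a)] (h :: t).
  by apply/allP => w Hw /=; rewrite (memPn Hnht _ Hw) (memPn Haht _ Hw).
have {}Hpt : path e h t by apply: make_leaf_path_off.
have Hh : e h a \/ e h n by apply: make_leaf_nbr; rewrite make_leaf_sym.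
have Hl' : e (last h t) a \/ e (last h t) n by apply: make_leaf_nbr.
case: Hh => Hh; case: Hl' => Hl'.
- exists a, (h :: t); split=> //=; [exact/andP | by rewrite e_sym Hh].
- exists a, (rcons (h :: t) n); split; rewrite ?size_rcons ?last_rcons //.
    by rewrite -rcons_cons rcons_uniq inE negb_or eq_sym a_neq_n Hnht /= Haht.
  by rewrite -cats1 cat_path /= e_sym Hh Hpt Hl'.
- exists a, (n :: h :: t); split=> //=.
    by rewrite !inE negb_or a_neq_n Haht Hnht.
  by rewrite e_sym e_na e_sym Hh.
- by exists n, (h :: t); split=> //=; rewrite ?Hnht ?Hut // e_sym Hh.
Qed.

Lemma make_leaf_acyclic : acyclic_graph make_leaf.
Proof.
case: e_tree => [_ [_ Hacyc]] [x [p Hcyc]].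
have Hn := make_leaf_cycle_avoid_n Hcyc.
case: (boolP (a \in x :: p)) => Ha.
  have [s Hs Hmem] := graph_cycle_rot Hcyc Ha.
  by apply/Hacyc/(make_leaf_cycle_through_a Hs); rewrite Hmem.
have Hall : all [pred u | (u != n) && (u != a)] (x :: p).
  by apply/allP => w Hw /=; rewrite (memPn Hn _ Hw) (memPn Ha _ Hw).
case: Hcyc => Hsz Hu Hp Hl; apply: Hacyc; exists x, p; split=> //.
  exact: make_leaf_path_off.
have /andP [Hln Hla] := allP Hall _ (mem_last x p).
have /andP [Hxn Hxa] := allP Hall _ (mem_head x p).
exact: make_leaf_off.
Qed.

Lemma make_leaf_spanning_tree : spanning_tree make_leaf.
Proof.
split; [split|split].
- exact: make_leaf_sym.
- by move=> x; rewrite /make_leaf eqxx.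
- exact: make_leaf_connected.
- exact: make_leaf_acyclic.
Qed.

Lemma make_leaf_sum_rate (gamma : 'I_N -> R) :
  2 <= N -> (forall i, (0 < gamma i)%R) -> (forall j, (gamma j <= gamma n)%R) ->
  (sum_rate gamma e <= sum_rate gamma make_leaf)%R.
Proof.
move=> HN Hpos Hmax; apply: sum_rate_le => // i.
apply: min_nbr_phi_glb; first exact: spanning_tree_has_nbr make_leaf_spanning_tree i.
move=> j /make_leaf_nbr [Hij|Hin]; first exact: min_nbr_phi_le.
by apply: Rle_trans (min_nbr_phi_le gamma Hin) _; apply: phi_antitone.
Qed.

End MakeLeaf.

Theorem lemma2 (N : nat) (gamma : 'I_N -> R) :
  2 <= N ->
  (forall i : 'I_N, (0 < gamma i)%R) ->
  (forall i j : 'I_N, i <= j -> (gamma i <= gamma j)%R) ->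
  exists e : rel 'I_N,
    sum_rate_optimal gamma e /\
    (forall v : 'I_N, nat_of_ord v = N.-1 -> degree e v = 1).
Proof.
move=> HN Hpos Hmono.
have HN0 : 0 < N by apply: ltnW.
have HnN : N.-1 < N by rewrite ltn_predL.
pose n : 'I_N := Ordinal HnN.
have Hmax j : (gamma j <= gamma n)%R.
  by apply: Hmono; rewrite /= -ltnS prednK.
have [e [He Hopt]] := exists_sum_rate_optimal gamma HN0.
have [a Hna] := spanning_tree_has_nbr HN He n.
exists (make_leaf e n a); split; [split|].
- exact: make_leaf_spanning_tree.
- move=> e' He'; apply: Rle_trans (Hopt _ He') _; exact: make_leaf_sum_rate.
- move=> v Hv; have -> : v = n by apply: val_inj.
  exact: make_leaf_degree.
Qed.
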